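(* Let $S=(\mathcal{E},\Sigma,X,\mathcal{O})$ and $S'=(\mathcal{E}',\Sigma',X',\mathcal{O}')$ be entities such that $S$ is a sub entity of $S'$ with connecting functions $m,n,l$. Then $m$ and $n$ are continuous for the eigen closure systems: if $F\in\mathcal{F}_{eig}$ then $m^{-1}(F)\in\mathcal{F}'_{eig}$, and if $G'\in\mathcal{G}'_{eig}$ then $n^{-1}(G')\in\mathcal{G}_{eig}$.
   Context: An entity $S=(\mathcal{E},\Sigma,X,\mathcal{O})$ consists of sets $\mathcal{E}$ (experiments), $\Sigma$ (states) and for each $e\in\mathcal{E},p\in\Sigma$ a nonempty set $O(e,p)$, with $X=\bigcup O(e,p)$; $O(e)=\bigcup_pO(e,p)$, $O(p)=\bigcup_eO(e,p)$. $S$ is a sub entity of $S'$ iff there are a surjective function $m:\Sigma'\to\Sigma$, an injective function $n:\mathcal{E}\to\mathcal{E}'$ and an injective function $l:X\to X'$ such that for each $p'\in\Sigma'$ and $e\in\mathcal{E}$, $l$ maps $O(e,m(p'))$ onto $O'(n(e),p')$, i.e. $l(O(e,m(p')))=O'(n(e),p')$. State eigen closure system: for $e\in\mathcal{E}$, $eig_e(A)=\{p\in\Sigma:O(e,p)\subseteq A\}$ ($A\subseteq O(e)$), $\mathcal{F}(e)=\{eig_e(A)\}$, and $\mathcal{F}_{eig}$ is the set of intersections of families of elements of $\bigcup_e\mathcal{F}(e)$. Experiment eigen closure system: for $p\in\Sigma$, $eig_p(A)=\{e\in\mathcal{E}:O(e,p)\subseteq A\}$ ($A\subseteq O(p)$),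 $\mathcal{G}(p)=\{eig_p(A)\}$, and $\mathcal{G}_{eig}$ is the set of intersections of families of elements of $\bigcup_p\mathcal{G}(p)$. Primed objects are defined analogously for $S'$. *)

Set Implicit Arguments.

(* An entity S = (E, Sigma, X, O): experiments, states, outcomes,
   O e p a nonempty subset of X, and X = union of all O(e,p). *)
Record Entity := {
  Exp : Type;
  St : Type;
  Out : Type;
  O : Exp -> St -> Out -> Prop;
  O_nonempty : forall e p, exists x, O e p x;
  X_union : forall x, exists e p, O e p x
}.

Definition Oe (S : Entity) (e : Exp S) (x : Out S) : Prop := exists p, O S e p x.
Definition Op (S : Entity) (p : St S) (x : Out S) : Prop := exists e, O S e p x.

Definition subset {T : Type} (A B : T -> Prop) : Prop := forall x, A x -> B x.

Definition eig_e (S : Entity) (e : Exp S) (A : Out S -> Prop) : St S -> Prop :=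
  fun p => subset (O S e p) A.
Definition eig_p (S : Entity) (p : St S) (A : Out S -> Prop) : Exp S -> Prop :=
  fun e => subset (O S e p) A.

Definition inFe_union (S : Entity) (G : St S -> Prop) : Prop :=
  exists e (A : Out S -> Prop), subset A (Oe S e) /\ (forall p, G p <-> eig_e S e A p).
Definition inGp_union (S : Entity) (G : Exp S -> Prop) : Prop :=
  exists p (A : Out S -> Prop), subset A (Op S p) /\ (forall e, G e <-> eig_p S p A e).

(* F_eig: intersections of (arbitrary, possibly empty) families of elements
   of the union of the F(e). *)
Definition F_eig (S : Entity) (F : St S -> Prop) : Prop :=
  exists Fam : (St S -> Prop) -> Prop,
    (forall G, Fam G -> inFe_union S G) /\
    (forall p, F p <-> (forall G, Fam G -> G p)).

Definition G_eig (S : Entity) (H : Exp S -> Prop) : Prop :=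
  exists Fam : (Exp S -> Prop) -> Prop,
    (forall G, Fam G -> inGp_union S G) /\
    (forall e, H e <-> (forall G, Fam G -> G e)).

Definition sub_entity (S S' : Entity)
  (m : St S' -> St S) (n : Exp S -> Exp S') (l : Out S -> Out S') : Prop :=
  (forall p, exists p', m p' = p) /\
  (forall e1 e2, n e1 = n e2 -> e1 = e2) /\
  (forall x1 x2, l x1 = l x2 -> x1 = x2) /\
  (forall (p' : St S') (e : Exp S) (x' : Out S'),
      O S' (n e) p' x' <-> exists x, O S e (m p') x /\ l x = x').

From Stdlib Require Import Setoid.

Set Implicit Arguments.

(* A map between closure systems generated by intersections is continuous as
   soon as preimages of generators are generators, so it suffices to treat
   single eigen sets.  Since O'(n e, p') = l(O(e, m p')) with l injective, p'
   is an eigenstate of n e for l(A) exactly when m p' is one of e for A; and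
   n e has its outcomes at p' inside A' exactly when e has its outcomes at
   m p' inside l^-1(A'). *)

(* [F_eig S] and [G_eig S] are, by unfolding, [intersection_of (inFe_union S)]
   and [intersection_of (inGp_union S)]. *)
Definition intersection_of {T : Type} (C : (T -> Prop) -> Prop) (F : T -> Prop) : Prop :=
  exists Fam : (T -> Prop) -> Prop,
    (forall G, Fam G -> C G) /\ (forall t, F t <-> (forall G, Fam G -> G t)).

Lemma intersection_of_preimage {T U : Type} (f : U -> T)
    (C : (T -> Prop) -> Prop) (C' : (U -> Prop) -> Prop) :
  (forall G, C G -> C' (fun u => G (f u))) ->
  forall F, intersection_of C F -> intersection_of C' (fun u => F (f u)).
Proof.
  intros HC F [Fam [HFam HF]].
  exists (fun H => exists G, Fam G /\ H = (fun u => G (f u))).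
  split.
  - intros H [G [HG ->]]. exact (HC G (HFam G HG)).
  - intros u. rewrite HF. split.
    + intros Hall H [G [HG ->]]. exact (Hall G HG).
    + intros Hall G HG. exact (Hall _ (ex_intro _ G (conj HG eq_refl))).
Qed.

Definition image {T U : Type} (f : T -> U) (A : T -> Prop) (y : U) : Prop :=
  exists x, A x /\ f x = y.

Lemma eig_p_restrict (S : Entity) (p : St S) (A : Out S -> Prop) (e : Exp S) :
  eig_p S p (fun x => A x /\ Op S p x) e <-> eig_p S p A e.
Proof.
  unfold eig_p, subset. split.
  - intros Hs x Hx. exact (proj1 (Hs x Hx)).
  - intros Hs x Hx. split; [exact (Hs x Hx) | exists e; exact Hx].
Qed.

Section SubEntity.

Variables (S S' : Entity) (m : St S' -> St S) (n : Exp S -> Exp S') (l : Out S -> Out S').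

Hypothesis m_surj : forall p, exists p', m p' = p.
Hypothesis l_inj : forall x1 x2, l x1 = l x2 -> x1 = x2.
Hypothesis O_sub : forall p' e x', O S' (n e) p' x' <-> exists x, O S e (m p') x /\ l x = x'.

Lemma O_sub_image p' e x : O S' (n e) p' (l x) <-> O S e (m p') x.
Proof.
  rewrite O_sub. split.
  - intros [y [Hy Hyx]]. rewrite <- (l_inj Hyx). exact Hy.
  - intros Hx. exists x. auto.
Qed.

Lemma Oe_sub_image e A : subset A (Oe S e) -> subset (image l A) (Oe S' (n e)).
Proof.
  intros HA x' [x [Ax <-]]. destruct (HA x Ax) as [p Hp].
  destruct (m_surj p) as [p' <-]. exists p'. apply O_sub_image. exact Hp.
Qed.

Lemma eig_e_sub e A p' : eig_e S' (n e) (image l A) p' <-> eig_e S e A (m p').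
Proof.
  unfold eig_e, subset. split.
  - intros Hs x Hx. apply O_sub_image, Hs in Hx.
    destruct Hx as [y [Ay Hyx]]. rewrite <- (l_inj Hyx). exact Ay.
  - intros Hs x' Hx'. apply O_sub in Hx'. destruct Hx' as [x [Hx <-]].
    exists x. auto.
Qed.

Lemma eig_p_sub p' A' e : eig_p S' p' A' (n e) <-> eig_p S (m p') (fun x => A' (l x)) e.
Proof.
  unfold eig_p, subset. split.
  - intros Hs x Hx. apply Hs, O_sub_image, Hx.
  - intros Hs x' Hx'. apply O_sub in Hx'. destruct Hx' as [x [Hx <-]]. exact (Hs x Hx).
Qed.

Lemma inFe_union_preimage G : inFe_union S G -> inFe_union S' (fun p' => G (m p')).
Proof.
  intros [e [A [HA HG]]]. exists (n e), (image l A). split.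
  - apply Oe_sub_image, HA.
  - intros p'. rewrite HG, eig_e_sub. reflexivity.
Qed.

Lemma inGp_union_preimage G' : inGp_union S' G' -> inGp_union S (fun e => G' (n e)).
Proof.
  intros [p' [A' [_ HG']]].
  exists (m p'), (fun x => A' (l x) /\ Op S (m p') x). split.
  - intros x [_ Hx]. exact Hx.
  - intros e. rewrite HG', eig_p_sub, eig_p_restrict. reflexivity.
Qed.

End SubEntity.

Theorem mainTheorem14 (S S' : Entity)
  (m : St S' -> St S) (n : Exp S -> Exp S') (l : Out S -> Out S') :
  sub_entity S S' m n l ->
  (forall F : St S -> Prop, F_eig S F -> F_eig S' (fun p' => F (m p'))) /\
  (forall G' : Exp S' -> Prop, G_eig S' G' -> G_eig S (fun e => G' (n e))).
Proof.
  intros [m_surj [_ [l_inj O_sub]]]. split.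
  - apply intersection_of_preimage; eapply inFe_union_preimage; eassumption.
  - apply intersection_of_preimage; eapply inGp_union_preimage; eassumption.
Qed.
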